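(* Let $\gamma>0$ and assume the minimum norm solution $\mathbf{u}^*=\mathbf{A}^\dagger\mathbf{b}$ satisfies $\mathbf{L}\mathbf{u}^*=\mathbf{g}$. Let $\tilde{\mathbf{b}}\in\mathbb{R}^m$ and let $\tilde{\mathbf{u}}^*_\gamma$ be a solution of $$\big((\mathbf{I}+\gamma\mathbf{A}^t\mathbf{A})\mathbf{A}^t\mathbf{A}+\gamma\mathbf{L}^t\mathbf{L}\big)\tilde{\mathbf{u}}^*_\gamma=(\mathbf{I}+\gamma\mathbf{A}^t\mathbf{A})\mathbf{A}^t\tilde{\mathbf{b}}+\gamma\mathbf{L}^t\mathbf{g},$$ and assume the same system with $\tilde{\mathbf{b}}$ replaced by $\mathbf{b}$ has a unique solution. Then $$\|\mathbf{A}\mathbf{u}^*-\mathbf{A}\tilde{\mathbf{u}}^*_\gamma\|_m\le\|(\mathbf{I}+\gamma\mathbf{A}\mathbf{A}^t)(\mathbf{b}-\tilde{\mathbf{b}})\|_m.$$ Moreover, if $m\ge n$ and $\mathbf{A}$ has full column rank $n$, then $$\|\mathbf{u}^*-\tilde{\mathbf{u}}^*_\gamma\|_n\le\frac{1}{\sqrt{\lambda_n}}\|(\mathbf{I}+\gamma\mathbf{A}\mathbf{A}^t)(\mathbf{b}-\tilde{\mathbf{b}})\|_m,$$ where $\lambda_n>0$ is the smallest eigenvalue of $\mathbf{A}^t\mathbf{A}$.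
   Context: $\mathbf{A}\in\mathbb{R}^{m\times n}$, $\mathbf{b}\in\mathbb{R}^m$, $\mathbf{L}\in\mathbb{R}^{p\times n}$, $\mathbf{g}\in\mathbb{R}^p$; $\mathbf{A}^\dagger$ is the Moore–Penrose pseudoinverse; $\|\cdot\|_m,\|\cdot\|_n$ are Euclidean norms; $\mathbf{I}$ denotes identity matrices of appropriate sizes. *)

From HB Require Import structures.
From mathcomp Require Import all_boot all_order all_algebra.
Set Implicit Arguments. Unset Strict Implicit. Unset Printing Implicit Defensive.
Import Order.TTheory GRing.Theory Num.Theory.
Local Open Scope ring_scope.

Definition enorm (R : rcfType) (k : nat) (v : 'cV[R]_k) : R :=
  Num.sqrt (\sum_(i < k) (v i 0) ^+ 2).

(* X is the Moore-Penrose pseudoinverse of A (the four Penrose conditions;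
   such an X exists and is unique). *)
Definition is_MP_pinv (R : rcfType) (m n : nat)
  (A : 'M[R]_(m, n)) (X : 'M[R]_(n, m)) : Prop :=
  [/\ A *m X *m A = A, X *m A *m X = X,
      (A *m X)^T = A *m X & (X *m A)^T = X *m A].

(* Write e := u* - u~ and d := (I + gamma A A^T)(b - b~).  Since A^T A A^+ = A^T,
   u* solves the normal equation A^T A u* = A^T b, and together with L u* = g
   this makes e solve the same system with right-hand side A^T d.  Pairing that
   system with e gives |Ae|^2 + gamma |A^T A e|^2 + gamma |L e|^2 = <Ae, d>,
   so |Ae|^2 <= <Ae, d>, whence |Ae| <= |d|.  For full column rank the Rayleigh
   bound lambda_n |e|^2 <= |Ae|^2 gives the second estimate. *)
From HB Require Import structures.
From mathcomp Require Import all_boot all_order all_algebra.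
From mathcomp Require Import sesquilinear spectral complex.
From mathcomp Require Import lra.
Import Order.TTheory GRing.Theory Num.Theory.
Set Implicit Arguments. Unset Strict Implicit.
Local Open Scope ring_scope.
Local Open Scope sesquilinear_scope.

Section DotProduct.
Variable R : rcfType.

Definition dot k (v w : 'cV[R]_k) : R := (v^T *m w) 0 0.

Lemma dotE k (v w : 'cV[R]_k) : dot v w = \sum_i v i 0 * w i 0.
Proof. by rewrite /dot mxE; apply: eq_bigr => i _; rewrite mxE. Qed.

Lemma dotC k (v w : 'cV[R]_k) : dot v w = dot w v.
Proof. by rewrite !dotE; apply: eq_bigr => i _; rewrite mulrC. Qed.

Lemma dot_mulmxr k l (v : 'cV[R]_k) (B : 'M[R]_(k, l)) w :
  dot v (B *m w) = dot (B^T *m v) w.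
Proof. by rewrite /dot trmx_mul trmxK mulmxA. Qed.

Lemma dotDr k (v w z : 'cV[R]_k) : dot v (w + z) = dot v w + dot v z.
Proof. by rewrite /dot mulmxDr mxE. Qed.

Lemma dotBr k (v w z : 'cV[R]_k) : dot v (w - z) = dot v w - dot v z.
Proof. by rewrite /dot mulmxBr !mxE. Qed.

Lemma dotZr k (v w : 'cV[R]_k) a : dot v (a *: w) = a * dot v w.
Proof. by rewrite /dot -scalemxAr mxE. Qed.

Lemma dot_ge0 k (v : 'cV[R]_k) : 0 <= dot v v.
Proof. by rewrite dotE; apply: sumr_ge0 => i _; rewrite -expr2 sqr_ge0. Qed.

Lemma dot_eq0 k (v : 'cV[R]_k) : dot v v = 0 -> v = 0.
Proof.
rewrite dotE => vv0; apply/matrixP => i j; rewrite ord1 mxE.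
have sq_ge0 (l : 'I_k) : true -> 0 <= v l 0 * v l 0 by rewrite -expr2 sqr_ge0.
have vi0 : v i 0 * v i 0 = 0 := psumr_eq0P sq_ge0 vv0 isT.
by move/eqP: vi0; rewrite mulf_eq0 orbb => /eqP.
Qed.

Lemma dot_gt0 k (v : 'cV[R]_k) : v != 0 -> 0 < dot v v.
Proof. by move=> v0; rewrite lt0r dot_ge0 andbT; apply: contraNneq v0 => /dot_eq0->. Qed.

Lemma enormE k (v : 'cV[R]_k) : enorm v = Num.sqrt (dot v v).
Proof. by rewrite /enorm dotE; congr Num.sqrt; apply: eq_bigr => i _; rewrite expr2. Qed.

Lemma ler_enorm k l (v : 'cV[R]_k) (w : 'cV[R]_l) :
  (enorm v <= enorm w) = (dot v v <= dot w w).
Proof. by rewrite !enormE ler_sqrt ?dot_ge0. Qed.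

(* Expand 0 <= |d - a|^2; this spares a Cauchy-Schwarz inequality. *)
Lemma dot_self_le k (a d : 'cV[R]_k) : dot a a <= dot a d -> dot a a <= dot d d.
Proof.
move=> aad; have := dot_ge0 (d - a).
rewrite dotBr (dotC (d - a) d) (dotC (d - a) a) !dotBr (dotC d a); lra.
Qed.

End DotProduct.

Section Rayleigh.
Variables (R : rcfType) (n : nat) (M : 'M[R]_n).
Hypothesis M_sym : M^T = M.

Let Mc := map_mx (real_complex R) M.

Lemma realsym_hermitian : Mc \is hermsymmx.
Proof.
apply: realsym_hermsym.
- apply/is_hermitianmxP; rewrite expr0 scale1r map_mx_id //.
  by rewrite /Mc map_trmx M_sym.
- by apply/mxOverP => i j; rewrite mxE; apply/complex_realP; eexists.
Qed.

Lemma spectral_diag_ge (lam : R) :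
  (forall mu, eigenvalue M mu -> lam <= mu) ->
  forall i, (lam%:C)%C <= spectral_diag Mc 0 i.
Proof.
move=> lam_min i.
have /orthomx_spectralP Mdec := hermitian_normalmx realsym_hermitian.
rewrite invmx_unitary ?spectral_unitarymx // in Mdec.
have /unitarymxP PP := spectral_unitarymx Mc.
have /mxOverP/(_ 0 i)/complex_realP[mu Di] :=
  hermitian_spectral_diag_real realsym_hermitian.
set P := spectralmx Mc in Mdec PP *; set D := spectral_diag Mc in Mdec Di *.
rewrite Di lecR; apply: lam_min.
rewrite eigenvalue_root_char -(fmorph_root (real_complex R)) map_char_poly.
suff: root (char_poly Mc) (D 0 i) by rewrite Di.
rewrite -eigenvalue_root_char; apply/eigenvalueP; exists (row i P).
  rewrite -row_mul Mdec !mulmxA PP mul1mx mul_diag_mx.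
  by apply/rowP => j; rewrite !mxE.
apply/eqP => /(congr1 (mulmx^~ (P ^t*))); rewrite -row_mul PP mul0mx.
by move/rowP/(_ i); rewrite !mxE eqxx /= => /eqP; rewrite oner_eq0.
Qed.

(* Diagonalise M by the unitary spectral basis over R[i]; in the coordinates
   y := P x both quadratic forms become sums of |y_i|^2, weighted by the
   eigenvalues for x^T M x. *)
Lemma rayleigh_ge (lam : R) :
  (forall mu, eigenvalue M mu -> lam <= mu) ->
  forall x : 'cV[R]_n, lam * dot x x <= dot x (M *m x).
Proof.
move=> lam_min x.
pose f := real_complex R; pose P := spectralmx Mc; pose D := spectral_diag Mc.
have /orthomx_spectralP Mdec := hermitian_normalmx realsym_hermitian.
rewrite invmx_unitary ?spectral_unitarymx // -/P -/D in Mdec.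
have /unitarymxP PP : P \is unitarymx by exact: spectral_unitarymx.
have PP' : P ^t* *m P = 1%:M by apply: mulmx1C.
pose y := P *m map_mx f x.
have x_real : (map_mx f x)^T \is a realmx.
  by apply/mxOverP => i j; rewrite !mxE; apply/complex_realP; eexists.
have ytE : y ^t* = (map_mx f x)^T *m P ^t*.
  by rewrite /y trmx_mul map_mxM (realmxC x_real).
have f_dot v w : f (dot v w) = ((map_mx f v)^T *m map_mx f w) 0 0.
  by rewrite /dot map_trmx -map_mxM [in RHS]mxE.
have xMx : f (dot x (M *m x)) = \sum_i D 0 i * (y i 0 * (y i 0)^*).
  have -> : f (dot x (M *m x)) = (y ^t* *m diag_mx D *m y) 0 0.
    by rewrite f_dot map_mxM -/Mc Mdec ytE /y !mulmxA.
  rewrite mxE; apply: eq_bigr => i _.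
  by rewrite mul_mx_diag !mxE mulrAC mulrC [_^* * _]mulrC.
have xx : f (dot x x) = \sum_i y i 0 * (y i 0)^*.
  have -> : f (dot x x) = (y ^t* *m y) 0 0.
    by rewrite f_dot ytE /y !mulmxA -(mulmxA _ _ P) PP' mulmx1.
  by rewrite mxE; apply: eq_bigr => i _; rewrite !mxE mulrC.
have fM : f (lam * dot x x) = f lam * f (dot x x) by exact: rmorphM.
suff : f (lam * dot x x) <= f (dot x (M *m x)) by rewrite lecR.
rewrite fM xMx xx mulr_sumr.
apply: ler_sum => i _; apply: ler_wpM2r; first exact: mul_conjC_ge0.
exact: spectral_diag_ge.
Qed.

End Rayleigh.

Section LeastSquares.
Variables (R : rcfType) (m n : nat) (A : 'M[R]_(m, n)).

Lemma pinv_normal_eq (X : 'M[R]_(n, m)) (b : 'cV[R]_m) :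
  is_MP_pinv A X -> A^T *m A *m (X *m b) = A^T *m b.
Proof. by case=> AXA _ AX_sym _; rewrite mulmxA -(mulmxA A^T) -AX_sym -trmx_mul AXA. Qed.

Lemma gram_sym : (A^T *m A)^T = A^T *m A.
Proof. by rewrite trmx_mul trmxK. Qed.

Lemma eigenvalue_gram_gt0 (lam : R) :
  \rank A = n -> eigenvalue (A^T *m A) lam -> 0 < lam.
Proof.
move=> rkA /eigenvalueP[v vM v0]; pose w := v^T.
have Mw : A^T *m A *m w = lam *: w by rewrite /w -gram_sym -trmx_mul vM linearZ.
have w0 : w != 0 by rewrite /w trmx_eq0.
have Aw0 : A *m w != 0.
  rewrite -trmx_eq0 trmx_mul trmxK mulmx_free_eq0 //.
  by rewrite /row_free mxrank_tr rkA.
have normAw : dot (A *m w) (A *m w) = lam * dot w w.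
  by rewrite -{1}(trmxK A) -dot_mulmxr mulmxA Mw dotZr.
by have := dot_gt0 Aw0; rewrite normAw pmulr_lgt0 // dot_gt0.
Qed.

Section Regularized.
Variables (p : nat) (L : 'M[R]_(p, n)) (gamma : R).

Let M := A^T *m A.
Let P := 1%:M + gamma *: M.
Let Q := P *m M + gamma *: (L^T *m L).

Lemma regularized_error_eq (us ut : 'cV[R]_n) (b bt : 'cV[R]_m) (g : 'cV[R]_p) :
  M *m us = A^T *m b -> L *m us = g ->
  Q *m ut = P *m (A^T *m bt) + gamma *: (L^T *m g) ->
  Q *m (us - ut) = A^T *m ((1%:M + gamma *: (A *m A^T)) *m (b - bt)).
Proof.
move=> Mus Lus Qut.
have PAt : P *m A^T = A^T *m (1%:M + gamma *: (A *m A^T)).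
  by rewrite /P /M mulmxDl mulmxDr mul1mx mulmx1 -scalemxAl -scalemxAr !mulmxA.
have Qus : Q *m us = P *m (A^T *m b) + gamma *: (L^T *m g).
  by rewrite /Q mulmxDl -mulmxA Mus -scalemxAl -mulmxA Lus.
rewrite mulmxBr Qus Qut opprD addrACA subrr addr0 -mulmxBr -mulmxBr.
by rewrite mulmxA PAt -mulmxA.
Qed.

Lemma regularized_residual_le (e : 'cV[R]_n) (d : 'cV[R]_m) :
  0 <= gamma -> Q *m e = A^T *m d -> dot (A *m e) (A *m e) <= dot (A *m e) d.
Proof.
move=> gamma_ge0 Qe.
have energy : dot (A *m e) d = dot (A *m e) (A *m e)
    + gamma * dot (M *m e) (M *m e) + gamma * dot (L *m e) (L *m e).
  have eMe : dot e (M *m e) = dot (A *m e) (A *m e).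
    by rewrite /M -mulmxA dot_mulmxr trmxK.
  have eMMe : dot e (M *m M *m e) = dot (M *m e) (M *m e).
    by rewrite -mulmxA dot_mulmxr gram_sym.
  have eLLe : dot e (L^T *m L *m e) = dot (L *m e) (L *m e).
    by rewrite -mulmxA dot_mulmxr trmxK.
  have -> : dot (A *m e) d = dot e (Q *m e) by rewrite Qe dot_mulmxr trmxK.
  by rewrite /Q /P !mulmxDl mul1mx -!scalemxAl !dotDr !dotZr eMe eMMe eLLe.
have := mulr_ge0 gamma_ge0 (dot_ge0 (M *m e)).
have := mulr_ge0 gamma_ge0 (dot_ge0 (L *m e)).
rewrite energy; lra.
Qed.

End Regularized.
End LeastSquares.

Theorem corollary1 (R : rcfType) (m n p : nat)
  (A : 'M[R]_(m, n)) (b : 'cV[R]_m) (L : 'M[R]_(p, n)) (g : 'cV[R]_p)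
  (Adag : 'M[R]_(n, m)) (gamma : R) (bt : 'cV[R]_m) (ut : 'cV[R]_n) :
  is_MP_pinv A Adag ->
  0 < gamma ->
  L *m (Adag *m b) = g ->
  ((1%:M + gamma *: (A^T *m A)) *m (A^T *m A) + gamma *: (L^T *m L)) *m ut
    = (1%:M + gamma *: (A^T *m A)) *m (A^T *m bt) + gamma *: (L^T *m g) ->
  (exists! u : 'cV[R]_n,
    ((1%:M + gamma *: (A^T *m A)) *m (A^T *m A) + gamma *: (L^T *m L)) *m u
      = (1%:M + gamma *: (A^T *m A)) *m (A^T *m b) + gamma *: (L^T *m g)) ->
  enorm (A *m (Adag *m b) - A *m ut)
    <= enorm ((1%:M + gamma *: (A *m A^T)) *m (b - bt))
  /\
  ((n <= m)%N -> \rank A = n ->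
   forall lam : R,
     eigenvalue (A^T *m A) lam ->
     (forall mu : R, eigenvalue (A^T *m A) mu -> lam <= mu) ->
     enorm (Adag *m b - ut)
       <= (Num.sqrt lam)^-1 * enorm ((1%:M + gamma *: (A *m A^T)) *m (b - bt))).
Proof.
move=> pinvA gamma_gt0 Lus Qut _.
set us := Adag *m b; set e := us - ut.
set d := (1%:M + gamma *: (A *m A^T)) *m (b - bt).
have Qe := regularized_error_eq (pinv_normal_eq b pinvA) Lus Qut.
have normAe : dot (A *m e) (A *m e) <= dot d d.
  exact/dot_self_le/(regularized_residual_le (ltW gamma_gt0) Qe).
split; first by rewrite -mulmxBr ler_enorm.
move=> _ rkA lam lam_eig lam_min.
have lam_gt0 := eigenvalue_gram_gt0 rkA lam_eig.
have := rayleigh_ge (gram_sym A) lam_min e.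
rewrite -mulmxA dot_mulmxr trmxK => rayleigh_e.
rewrite !enormE ler_pdivlMl ?sqrtr_gt0 // -sqrtrM ?ler_sqrt ?dot_ge0 ?(ltW lam_gt0) //.
exact: le_trans rayleigh_e normAe.
Qed.
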